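(* Let $\mathcal F=(F,\rightarrowtail)$ be an argumentation framework and $A\subseteq F$. Then $A$ is strongly tenable if and only if $A$ is $1$-strongly tenable, i.e., Pro has a winning strategy starting with $X_0=A$ in the strong tenability game in which each move after $X_0$ introduces at most one new argument.
   Context: An argumentation framework (AF) $\mathcal F=(F,\rightarrowtail)$ consists of a (possibly infinite) set $F$ of arguments and a binary attack relation $\rightarrowtail\subseteq F\times F$. An argument $a$ attacks a set $B$ if $a\rightarrowtail b$ for some $b\in B$. $A^+=\{x\in F:\exists a\in A,\ a\rightarrowtail x\}$. A set is conflict-free if none of its elements attacks one of its elements. For $A,B\subseteq F$, $A$ is as cogent as $B$, written $A\succeq B$, if $A$ is conflict-free and every $b\in B$ that attacks $A$ belongs to $A^+$. Strong tenability game: a strong tenability dispute on $\mathcal F$ is a finite sequence $(X_0,\dots,X_n)$ of subsets of $F$, where even-indexed sets are moves of the Proponent (Pro) and odd-indexed sets are moves of the Opponent (Opp), such that (1) each $X_i$ is conflict-free; (2) $X_i\subseteq X_{i+2}$ whenever both are defined; (3) $X_1$ and each $X_{i+2}\setminus X_i$ are finite; (4) every Pro move $X_{2k}$ with $k\ge 1$ satisfies $X_{2k}\succeq X_{2k-1}$; (5) every Opp move $X_{2k+1}$ satisfies $X_{2k}\not\succeq X_{2k+1}$ (some element of $X_{2k+1}$ attacks $X_{2k}$ and is not in $X_{2k}^+$). Play starts with $X_0=A$ and players alternately extend the sequence so that it remains a dispute. A dispute is concluded if it has no legal extension; a concluded dispute is won by the player who made its last move. A strategy for Pro assigns to each dispute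 ending with an Opp move a legal Pro reply; it is winning if every concluded dispute starting with $X_0=A$ in which Pro follows it is won by Pro (infinite plays count as wins for Pro). $A$ is strongly tenable if Pro has a winning strategy starting with $X_0=A$. For $n\ge1$, the $n$-strong tenability game is the strong tenability game with the additional constraint that $|X_1|\le n$ and $|X_{i+2}\setminus X_i|\le n$ for every $i$ (each move except Pro's first introduces at most $n$ new arguments); $A$ is $n$-strongly tenable if Pro has a winning strategy starting with $X_0=A$ in this game. *)

From Stdlib Require Import List Arith.
Import ListNotations.

Section AF.
Context {T : Type} (att : T -> T -> Prop).

Definition conflict_free (S : T -> Prop) : Prop :=
  forall a b, S a -> S b -> ~ att a b.

Definition plus (S : T -> Prop) (x : T) : Prop := exists a, S a /\ att a x.

Definition attacks_set (a : T) (S : T -> Prop) : Prop := exists b, S b /\ att a b.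

Definition cogent (A B : T -> Prop) : Prop :=
  conflict_free A /\ forall b, B b -> attacks_set b A -> plus A b.

End AF.

Definition finite_set {T : Type} (S : T -> Prop) : Prop :=
  exists l : list T, forall x, S x -> In x l.

Definition card_le {T : Type} (S : T -> Prop) (n : nat) : Prop :=
  exists l : list T, length l <= n /\ forall x, S x -> In x l.

Definition set_diff {T : Type} (S U : T -> Prop) : T -> Prop := fun x => S x /\ ~ U x.

Definition subset {T : Type} (S U : T -> Prop) : Prop := forall x, S x -> U x.

(* Size constraint on new arguments: None = strong tenability game (finite),
   Some n = n-strong tenability game (finite and at most n). *)
Definition size_ok {T : Type} (bd : option nat) (S : T -> Prop) : Prop :=
  finite_set S /\ match bd with None => True | Some n => card_le S n end.

Section Game.
Context {T : Type} (att : T -> T -> Prop) (bd : option nat).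

Definition X (d : list (T -> Prop)) (i : nat) : T -> Prop := nth i d (fun _ => False).

Definition is_dispute (d : list (T -> Prop)) : Prop :=
  d <> [] /\
  (forall i, i < length d -> conflict_free att (X d i)) /\
  (forall i, i + 2 < length d -> subset (X d i) (X d (i + 2))) /\
  (1 < length d -> size_ok bd (X d 1)) /\
  (forall i, i + 2 < length d -> size_ok bd (set_diff (X d (i + 2)) (X d i))) /\
  (forall k, 1 <= k -> 2 * k < length d -> cogent att (X d (2 * k)) (X d (2 * k - 1))) /\
  (forall k, 2 * k + 1 < length d -> ~ cogent att (X d (2 * k)) (X d (2 * k + 1))).

Definition starts_with (A : T -> Prop) (d : list (T -> Prop)) : Prop := X d 0 = A.

Definition concluded (d : list (T -> Prop)) : Prop :=
  is_dispute d /\ forall Y, ~ is_dispute (d ++ [Y]).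

(* the last move X_{length d - 1} has even index, i.e. was made by Pro *)
Definition won_by_pro (d : list (T -> Prop)) : Prop := Nat.odd (length d) = true.

(* strategy for Pro: maps disputes (ending with an Opp move) to Pro's reply *)
Definition strategy := list (T -> Prop) -> (T -> Prop).

Definition follows (s : strategy) (d : list (T -> Prop)) : Prop :=
  forall k, 1 <= k -> 2 * k < length d -> X d (2 * k) = s (firstn (2 * k) d).

Definition winning (A : T -> Prop) (s : strategy) : Prop :=
  (forall d, is_dispute d -> starts_with A d -> follows s d ->
     Nat.even (length d) = true -> is_dispute (d ++ [s d])) /\
  (forall d, concluded d -> starts_with A d -> follows s d -> won_by_pro d).

Definition pro_wins_game (A : T -> Prop) : Prop := exists s, winning A s.

End Game.

Definition strongly_tenable {T : Type} (att : T -> T -> Prop) (A : T -> Prop) : Prop :=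
  pro_wins_game att None A.

Definition n_strongly_tenable {T : Type} (att : T -> T -> Prop) (n : nat) (A : T -> Prop) : Prop :=
  pro_wins_game att (Some n) A.

From Stdlib Require Import List Arith Lia Classical ClassicalEpsilon.
Import ListNotations.

(* Both directions are simulations: Pro plays one game while running in the background
   a "shadow" dispute of the other game, in which he follows his winning strategy.
   Given a winning strategy for the unbounded game, an Opp move of the 1-game adds one
   argument b attacking Pro's set undefended; Pro passes b on to the shadow, whose answer
   contains some c attacking b, and plays his current set plus c.  Given a winning strategy
   for the 1-game, an Opp move Y of the unbounded game is finite, so Pro feeds its undefended
   arguments to the shadow one at a time until the shadow's Pro set is as cogent as Y, and
   plays that set.  A strategy that always preserves such an invariant is winning, since it
   never runs out of legal replies. *)

Section Disputes.
Context {T : Type} (att : T -> T -> Prop).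
Local Notation D := (list (T -> Prop)).

Lemma X_app (d e : D) i : i < length d -> X (d ++ e) i = X d i.
Proof. intros H. unfold X. apply app_nth1; exact H. Qed.

Lemma X_snoc (d : D) Y i : i = length d -> X (d ++ [Y]) i = Y.
Proof. intros ->. unfold X. rewrite app_nth2, Nat.sub_diag by lia. reflexivity. Qed.

Lemma conflict_free_subset (S U : T -> Prop) :
  subset S U -> conflict_free att U -> conflict_free att S.
Proof. intros HSU HU a b Ha Hb. apply HU; auto. Qed.

Lemma plus_subset (S U : T -> Prop) x : subset S U -> plus att S x -> plus att U x.
Proof. intros HSU [a [Ha Hax]]. exists a; auto. Qed.

Lemma attacks_set_subset (S U : T -> Prop) x :
  subset S U -> attacks_set att x S -> attacks_set att x U.
Proof. intros HSU [b [Hb Hxb]]. exists b; auto. Qed.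

Lemma cogent_of_subset_plus (Z Y : T -> Prop) :
  conflict_free att Z -> subset Y (plus att Z) -> cogent att Z Y.
Proof. intros HZ HY. split; [exact HZ|]. intros y Hy _. auto. Qed.

Lemma finite_set_cover (S U V : T -> Prop) :
  finite_set U -> finite_set V -> (forall x, S x -> U x \/ V x) -> finite_set S.
Proof.
  intros [lU HU] [lV HV] HS. exists (lU ++ lV). intros x Hx.
  apply in_or_app. destruct (HS x Hx); auto.
Qed.

Lemma size_ok_subset bd (S U : T -> Prop) : subset S U -> size_ok bd U -> size_ok bd S.
Proof.
  intros HSU [[l Hl] Hbd]. split; [exists l; auto|].
  destruct bd as [n|]; [|exact I]. destruct Hbd as [l' [Hlen Hl']]. exists l'; auto.
Qed.

Lemma size_ok_eq bd (x : T) : bd <> Some 0 -> size_ok bd (eq x).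
Proof.
  intros Hbd. split; [exists [x]; intros y Hy; left; exact Hy|].
  destruct bd as [[|n]|]; [congruence| |exact I].
  exists [x]. split; [simpl; lia|]. intros y Hy. left. exact Hy.
Qed.

Lemma size_ok_one_eq (S : T -> Prop) x y : size_ok (Some 1) S -> S x -> S y -> y = x.
Proof.
  intros [_ [l [Hlen Hl]]] Hx Hy.
  destruct l as [|a [|a' l]]; simpl in Hlen; try lia.
  - destruct (Hl x Hx).
  - destruct (Hl x Hx) as [<-|[]], (Hl y Hy) as [<-|[]]. reflexivity.
Qed.

(* The clauses (1)-(5) of a dispute that mention the move [X_(length d)]. *)
Definition legal_move bd (d : D) (Y : T -> Prop) : Prop :=
  conflict_free att Y /\
  (length d = 1 -> size_ok bd Y) /\
  (forall i, i + 2 = length d -> subset (X d i) Y /\ size_ok bd (set_diff Y (X d i))) /\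
  (forall k, 1 <= k -> 2 * k = length d -> cogent att Y (X d (2 * k - 1))) /\
  (forall k, 2 * k + 1 = length d -> ~ cogent att (X d (2 * k)) Y).

Lemma is_dispute_snoc_inv bd (d : D) Y : d <> [] ->
  is_dispute att bd (d ++ [Y]) -> is_dispute att bd d /\ legal_move bd d Y.
Proof.
  intros Hne. unfold is_dispute, legal_move. rewrite length_app; cbn [length].
  intros (_ & Hcf & Hsub & H1 & Hsz & Hpro & Hopp).
  split; (split; [|split; [|split]]).
  - exact Hne.
  - intros i Hi. rewrite <- (X_app d [Y]) by lia. apply Hcf; lia.
  - intros i Hi. rewrite <- (X_app d [Y] i), <- (X_app d [Y] (i + 2)) by lia. apply Hsub; lia.
  - split; [|split; [|split]].
    + intros Hl. rewrite <- (X_app d [Y]) by lia. apply H1; lia.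
    + intros i Hi. rewrite <- (X_app d [Y] i), <- (X_app d [Y] (i + 2)) by lia. apply Hsz; lia.
    + intros k Hk Hl. rewrite <- (X_app d [Y] (2 * k)), <- (X_app d [Y] (2 * k - 1)) by lia.
      apply Hpro; lia.
    + intros k Hl. rewrite <- (X_app d [Y] (2 * k)), <- (X_app d [Y] (2 * k + 1)) by lia.
      apply Hopp; lia.
  - rewrite <- (X_snoc d Y (length d)) by reflexivity. apply Hcf; lia.
  - intros Hl. rewrite <- (X_snoc d Y 1) by lia. apply H1; lia.
  - intros i Hi. rewrite <- (X_snoc d Y (i + 2)), <- (X_app d [Y] i) by lia.
    split; [apply Hsub | apply Hsz]; lia.
  - split.
    + intros k Hk Hl. rewrite <- (X_snoc d Y (2 * k)), <- (X_app d [Y] (2 * k - 1)) by lia.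
      apply Hpro; lia.
    + intros k Hl. rewrite <- (X_snoc d Y (2 * k + 1)), <- (X_app d [Y] (2 * k)) by lia.
      apply Hopp; lia.
Qed.

Lemma is_dispute_snoc_intro bd (d : D) Y :
  is_dispute att bd d -> legal_move bd d Y -> is_dispute att bd (d ++ [Y]).
Proof.
  intros (_ & Hcf & Hsub & H1 & Hsz & Hpro & Hopp) (HcfY & H1Y & HszY & HproY & HoppY).
  split; [|split; [|split; [|split; [|split; [|split]]]]]; rewrite ?length_app; cbn [length].
  - intros E. apply app_eq_nil in E. destruct E as [_ E]. discriminate.
  - intros i Hi. destruct (Nat.eq_dec i (length d)) as [E|E].
    + rewrite X_snoc by exact E. exact HcfY.
    + rewrite X_app by lia. apply Hcf; lia.
  - intros i Hi. rewrite (X_app d [Y] i) by lia. destruct (Nat.eq_dec (i + 2) (length d)) as [E|E].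
    + rewrite X_snoc by exact E. apply HszY; exact E.
    + rewrite X_app by lia. apply Hsub; lia.
  - intros Hl. destruct (Nat.eq_dec (length d) 1) as [E|E].
    + rewrite X_snoc by lia. apply H1Y; exact E.
    + rewrite X_app by lia. apply H1; lia.
  - intros i Hi. rewrite (X_app d [Y] i) by lia. destruct (Nat.eq_dec (i + 2) (length d)) as [E|E].
    + rewrite X_snoc by exact E. apply HszY; exact E.
    + rewrite X_app by lia. apply Hsz; lia.
  - intros k Hk Hl. rewrite (X_app d [Y] (2 * k - 1)) by lia.
    destruct (Nat.eq_dec (2 * k) (length d)) as [E|E].
    + rewrite X_snoc by exact E. apply HproY; assumption.
    + rewrite X_app by lia. apply Hpro; lia.
  - intros k Hl. rewrite (X_app d [Y] (2 * k)) by lia.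
    destruct (Nat.eq_dec (2 * k + 1) (length d)) as [E|E].
    + rewrite X_snoc by exact E. apply HoppY; exact E.
    + rewrite X_app by lia. apply Hopp; lia.
Qed.

Lemma is_dispute_snoc bd (d : D) Y : d <> [] ->
  is_dispute att bd (d ++ [Y]) <-> is_dispute att bd d /\ legal_move bd d Y.
Proof.
  intros Hne. split; [apply is_dispute_snoc_inv, Hne |].
  intros [Hd HY]. apply is_dispute_snoc_intro; assumption.
Qed.

Definition pro_set (d : D) : T -> Prop := X d (pred (length d)).

(* Empty before Opp's first move, so that X_1 obeys the same rule as later Opp moves. *)
Definition opp_set (d : D) : T -> Prop :=
  match length d with S (S k) => X d k | _ => fun _ => False end.

Definition opp_move bd (P O Y : T -> Prop) : Prop :=
  conflict_free att Y /\ subset O Y /\ size_ok bd (set_diff Y O) /\ ~ cogent att P Y.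

Definition pro_move bd (P Y Z : T -> Prop) : Prop :=
  subset P Z /\ size_ok bd (set_diff Z P) /\ cogent att Z Y.

Lemma is_dispute_opp_snoc bd (d : D) Y :
  is_dispute att bd d -> Nat.odd (length d) = true ->
  is_dispute att bd (d ++ [Y]) <-> opp_move bd (pro_set d) (opp_set d) Y.
Proof.
  intros Hd Hodd. rewrite is_dispute_snoc by (destruct Hd; assumption).
  apply Nat.odd_spec in Hodd. destruct Hodd as [m Hm].
  unfold legal_move, opp_move, pro_set, opp_set. rewrite Hm.
  destruct m as [|m].
  - cbn. split.
    + intros [_ (HcfY & H1 & _ & _ & Hopp)]. split; [exact HcfY|]. split; [intros x []|].
      split; [|exact (Hopp 0 eq_refl)].
      apply size_ok_subset with Y; [intros x [Hx _]; exact Hx | exact (H1 eq_refl)].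
    + intros (HcfY & _ & Hsz & Hnc). split; [exact Hd|]. split; [exact HcfY|].
      split; [|split; [intros i Hi; lia | split; [intros k Hk Hl; lia|]]].
      * intros _. apply size_ok_subset with (set_diff Y (fun _ => False)); [|exact Hsz].
        intros x Hx. split; [exact Hx | intros []].
      * intros k Hl. replace k with 0 by lia. exact Hnc.
  - replace (2 * S m + 1) with (S (S (2 * m + 1))) by lia. cbn [pred]. split.
    + intros [_ (HcfY & _ & Hsz & _ & Hopp)]. destruct (Hsz (2 * m + 1)) as [Hsub Hsz']; [lia|].
      split; [exact HcfY|]. split; [exact Hsub|]. split; [exact Hsz'|].
      replace (S (2 * m + 1)) with (2 * S m) by lia. apply Hopp. lia.
    + intros (HcfY & Hsub & Hsz & Hnc). split; [exact Hd|]. split; [exact HcfY|].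
      split; [intros Hl; lia|]. split; [|split].
      * intros i Hi. replace i with (2 * m + 1) by lia. split; assumption.
      * intros k Hk Hl. lia.
      * intros k Hl. replace (2 * k) with (S (2 * m + 1)) by lia. exact Hnc.
Qed.

Lemma is_dispute_pro_snoc bd (d : D) Y Z :
  is_dispute att bd (d ++ [Y]) -> Nat.odd (length d) = true ->
  is_dispute att bd ((d ++ [Y]) ++ [Z]) <-> pro_move bd (pro_set d) Y Z.
Proof.
  intros Hd Hodd. rewrite is_dispute_snoc by (destruct Hd; assumption).
  apply Nat.odd_spec in Hodd. destruct Hodd as [m Hm].
  unfold legal_move, pro_move, pro_set. rewrite length_app. cbn [length]. rewrite Hm.
  replace (pred (2 * m + 1)) with (2 * m) by lia.
  assert (EY : X (d ++ [Y]) (2 * S m - 1) = Y) by (apply X_snoc; lia).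
  split.
  - intros [_ (_ & _ & Hsz & Hpro & _)].
    destruct (Hsz (2 * m)) as [Hsub Hsz']; [lia|].
    rewrite (X_app d [Y] (2 * m)) in Hsub, Hsz' by lia.
    split; [exact Hsub|]. split; [exact Hsz'|]. rewrite <- EY. apply Hpro; lia.
  - intros (Hsub & Hsz & Hcog). split; [exact Hd|]. split; [exact (proj1 Hcog)|].
    split; [intros Hl; lia|]. split; [|split].
    + intros i Hi. replace i with (2 * m) by lia.
      rewrite (X_app d [Y] (2 * m)) by lia. split; assumption.
    + intros k Hk Hl. replace k with (S m) by lia. rewrite EY. exact Hcog.
    + intros k Hl. lia.
Qed.

Lemma pro_set_snoc2 (d : D) Y Z : pro_set ((d ++ [Y]) ++ [Z]) = Z.
Proof. unfold pro_set. apply X_snoc. rewrite !length_app. cbn. lia. Qed.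

Lemma opp_set_snoc2 (d : D) Y Z : opp_set ((d ++ [Y]) ++ [Z]) = Y.
Proof.
  unfold opp_set. rewrite !length_app. cbn [length].
  replace (length d + 1 + 1) with (S (S (length d))) by lia.
  rewrite X_app by (rewrite length_app; cbn; lia). apply X_snoc. reflexivity.
Qed.

Lemma odd_length_snoc2 (d : D) Y Z :
  Nat.odd (length ((d ++ [Y]) ++ [Z])) = Nat.odd (length d).
Proof.
  rewrite !length_app. cbn [length].
  replace (length d + 1 + 1) with (S (S (length d))) by lia.
  rewrite Nat.odd_succ, Nat.even_succ. reflexivity.
Qed.

Lemma firstn_app_le (d e : D) n : n <= length d -> firstn n (d ++ e) = firstn n d.
Proof. intros H. rewrite firstn_app. replace (n - length d) with 0 by lia. apply app_nil_r. Qed.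

Lemma follows_prefix (s : strategy) (d : D) Y : follows s (d ++ [Y]) -> follows s d.
Proof.
  intros H k Hk Hl. rewrite <- (X_app d [Y]) by lia.
  rewrite H by (rewrite ?length_app; cbn; lia). rewrite firstn_app_le by lia. reflexivity.
Qed.

Lemma follows_snoc_opp (s : strategy) (d : D) Y :
  follows s d -> Nat.odd (length d) = true -> follows s (d ++ [Y]).
Proof.
  intros H Hodd k Hk Hl. apply Nat.odd_spec in Hodd. destruct Hodd as [m Hm].
  rewrite length_app in Hl. cbn in Hl.
  rewrite X_app, firstn_app_le by lia. apply H; lia.
Qed.

Lemma follows_snoc_reply (s : strategy) (d : D) : follows s d -> follows s (d ++ [s d]).
Proof.
  intros H k Hk Hl. rewrite length_app in Hl. cbn in Hl. rewrite firstn_app_le by lia.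
  destruct (Nat.eq_dec (2 * k) (length d)) as [E|E].
  - rewrite X_snoc, E, firstn_all by exact E. reflexivity.
  - rewrite X_app by lia. apply H; lia.
Qed.

Lemma follows_snoc2_last (s : strategy) (d : D) Y Z :
  follows s ((d ++ [Y]) ++ [Z]) -> Nat.odd (length d) = true -> Z = s (d ++ [Y]).
Proof.
  intros H Hodd. apply Nat.odd_spec in Hodd. destruct Hodd as [m Hm].
  assert (Hl : 2 * S m = length (d ++ [Y])) by (rewrite length_app; cbn; lia).
  specialize (H (S m)). rewrite X_snoc, Hl, firstn_app_le, firstn_all in H by lia.
  apply H; rewrite ?length_app; cbn; lia.
Qed.

Lemma starts_with_snoc A (d : D) Y : d <> [] -> starts_with A (d ++ [Y]) <-> starts_with A d.
Proof.
  intros Hne. unfold starts_with. rewrite X_app; [reflexivity|].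
  destruct d; [congruence | cbn; lia].
Qed.

(* Odd length: Opp is to move. *)
Definition reachable bd A (s : strategy) (d : D) : Prop :=
  is_dispute att bd d /\ starts_with A d /\ follows s d /\ Nat.odd (length d) = true.

Lemma reachable_init bd A (s : strategy) : conflict_free att A -> reachable bd A s [A].
Proof.
  intros HA. split; [|split; [reflexivity | split; [intros k Hk Hl; cbn in Hl; lia | reflexivity]]].
  split; [discriminate|]. split; [|split; [|split; [|split; [|split]]]]; cbn; try (intros; lia).
  intros i Hi. replace i with 0 by lia. exact HA.
Qed.

Lemma reachable_of_snoc bd A (s : strategy) (d : D) Y :
  is_dispute att bd (d ++ [Y]) -> starts_with A (d ++ [Y]) -> follows s (d ++ [Y]) ->
  Nat.odd (length d) = true -> reachable bd A s d.
Proof.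
  intros Hd Hst Hf Hodd. assert (Hne : d <> []) by (intros ->; discriminate).
  split; [apply (is_dispute_snoc bd d Y Hne); exact Hd|].
  split; [apply (starts_with_snoc A d Y Hne); exact Hst|].
  split; [exact (follows_prefix s d Y Hf) | exact Hodd].
Qed.

Lemma is_dispute_pro_set_cf bd (d : D) : is_dispute att bd d -> conflict_free att (pro_set d).
Proof. intros (Hne & Hcf & _). apply Hcf. destruct d; [congruence | cbn; lia]. Qed.

Lemma reachable_snoc2_prefix bd A (s : strategy) (d : D) Y Z :
  reachable bd A s ((d ++ [Y]) ++ [Z]) -> reachable bd A s d /\ is_dispute att bd (d ++ [Y]).
Proof.
  intros (Hd & Hst & Hf & Hodd). rewrite odd_length_snoc2 in Hodd.
  assert (Hne : d ++ [Y] <> []) by apply not_eq_sym, app_cons_not_nil.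
  assert (HdY : is_dispute att bd (d ++ [Y]))
    by exact (proj1 (is_dispute_snoc_inv bd _ Z Hne Hd)).
  split; [|exact HdY].
  apply reachable_of_snoc with Y; [exact HdY | | exact (follows_prefix s _ Z Hf) | exact Hodd].
  exact (proj1 (starts_with_snoc A _ Z Hne) Hst).
Qed.

Lemma reachable_advance bd A (s : strategy) (h : D) Y :
  winning att bd A s -> reachable bd A s h -> opp_move bd (pro_set h) (opp_set h) Y ->
  exists h', reachable bd A s h' /\ opp_set h' = Y /\ pro_move bd (pro_set h) Y (pro_set h').
Proof.
  intros [Hlegal _] (Hh & Hst & Hf & Hodd) HY.
  assert (Hne : h <> []) by (destruct Hh; assumption).
  assert (HhY : is_dispute att bd (h ++ [Y])) by (apply is_dispute_opp_snoc; assumption).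
  assert (HstY : starts_with A (h ++ [Y])) by (apply starts_with_snoc; assumption).
  assert (HfY : follows s (h ++ [Y])) by (apply follows_snoc_opp; assumption).
  assert (HZ : is_dispute att bd ((h ++ [Y]) ++ [s (h ++ [Y])])).
  { apply Hlegal; try assumption.
    rewrite length_app, Nat.add_1_r, Nat.even_succ. exact Hodd. }
  exists ((h ++ [Y]) ++ [s (h ++ [Y])]). rewrite pro_set_snoc2, opp_set_snoc2.
  split; [|split; [reflexivity | apply is_dispute_pro_snoc; assumption]].
  split; [exact HZ|].
  split; [apply starts_with_snoc; [apply not_eq_sym, app_cons_not_nil | exact HstY]|].
  split; [apply follows_snoc_reply; exact HfY|]. rewrite odd_length_snoc2. exact Hodd.
Qed.

Lemma reachable_counter_attack bd A (s : strategy) (h : D) (U : T -> Prop) x :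
  winning att bd A s -> reachable bd A s h -> bd <> Some 0 ->
  conflict_free att U -> subset (opp_set h) U -> U x ->
  attacks_set att x (pro_set h) -> ~ plus att (pro_set h) x ->
  exists h', reachable bd A s h' /\ subset (opp_set h') U /\
    subset (pro_set h) (pro_set h') /\ size_ok bd (set_diff (pro_set h') (pro_set h)) /\
    plus att (pro_set h') x.
Proof.
  intros Hw Hh Hbd HU HhU Ux Ax Nx.
  set (Y := fun y => opp_set h y \/ x = y).
  assert (HYU : subset Y U) by (intros y [Hy | <-]; auto).
  assert (HY : opp_move bd (pro_set h) (opp_set h) Y).
  { split; [|split; [|split]].
    - exact (conflict_free_subset Y U HYU HU).
    - intros y Hy. left. exact Hy.
    - apply size_ok_subset with (eq x); [|exact (size_ok_eq bd x Hbd)].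
      intros y [[Hy | Hy] Hn]; [contradiction | exact Hy].
    - intros [_ Hcog]. apply Nx, Hcog; [right; reflexivity | exact Ax]. }
  destruct (reachable_advance bd A s h Y Hw Hh HY) as (h' & Hh' & Hopp & Hsub & Hsz & Hcog).
  exists h'. rewrite Hopp.
  split; [exact Hh'|]. split; [exact HYU|]. split; [exact Hsub|]. split; [exact Hsz|].
  apply (proj2 Hcog); [right; reflexivity | exact (attacks_set_subset _ _ x Hsub Ax)].
Qed.

Section Invariant.
Variables (bd : option nat) (A : T -> Prop) (Good : D -> Prop).
Hypothesis Good_init : conflict_free att A -> Good [A].
Hypothesis Good_step : forall (d : D) Y,
  is_dispute att bd d -> Nat.odd (length d) = true -> Good d ->
  opp_move bd (pro_set d) (opp_set d) Y ->
  exists Z, pro_move bd (pro_set d) Y Z /\ Good ((d ++ [Y]) ++ [Z]).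

Definition invariant_strategy : strategy := fun d =>
  epsilon (inhabits (fun _ => False)) (fun Z => is_dispute att bd (d ++ [Z]) /\ Good (d ++ [Z])).

Lemma invariant_strategy_spec (d : D) Y :
  is_dispute att bd d -> Nat.odd (length d) = true -> Good d -> is_dispute att bd (d ++ [Y]) ->
  is_dispute att bd ((d ++ [Y]) ++ [invariant_strategy (d ++ [Y])]) /\
  Good ((d ++ [Y]) ++ [invariant_strategy (d ++ [Y])]).
Proof.
  intros Hd Hodd HG HdY.
  apply (epsilon_spec (inhabits (fun _ => False))
    (fun Z => is_dispute att bd ((d ++ [Y]) ++ [Z]) /\ Good ((d ++ [Y]) ++ [Z]))).
  pose proof (proj1 (is_dispute_opp_snoc bd d Y Hd Hodd) HdY) as HY.
  destruct (Good_step d Y Hd Hodd HG HY) as [Z [HZ HGZ]].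
  exists Z. split; [apply (is_dispute_pro_snoc bd d Y Z HdY Hodd); exact HZ | exact HGZ].
Qed.

Lemma reachable_Good (d : D) : reachable bd A invariant_strategy d -> Good d.
Proof.
  induction d as [d IH] using (induction_ltof1 _ (@length (T -> Prop))). intros Hr.
  destruct (Nat.eq_dec (length d) 1) as [E|E].
  - destruct d as [|a [|b d]]; try discriminate.
    destruct Hr as (Hd & Hst & _). unfold starts_with, X in Hst. cbn in Hst. subst a.
    apply Good_init. exact (is_dispute_pro_set_cf bd [A] Hd).
  - assert (Hne : d <> []) by (destruct Hr as ((Hne & _) & _); exact Hne).
    destruct (exists_last Hne) as [d1 [Z ->]].
    assert (Hne1 : d1 <> []) by (intros ->; apply E; reflexivity).
    destruct (exists_last Hne1) as [d0 [Y ->]].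
    destruct (reachable_snoc2_prefix bd A _ d0 Y Z Hr) as [Hr0 HdY].
    assert (HG0 : Good d0).
    { apply IH; [unfold ltof; rewrite !length_app; cbn; lia | exact Hr0]. }
    destruct Hr0 as (Hd0 & _ & _ & Hodd0).
    destruct Hr as (_ & _ & Hf & _).
    rewrite (follows_snoc2_last _ d0 Y Z Hf Hodd0).
    apply (invariant_strategy_spec d0 Y Hd0 Hodd0 HG0 HdY).
Qed.

Lemma pro_wins_of_invariant : pro_wins_game att bd A.
Proof.
  assert (Hlegal : forall d,
    is_dispute att bd d -> starts_with A d -> follows invariant_strategy d ->
    Nat.even (length d) = true -> is_dispute att bd (d ++ [invariant_strategy d])).
  { intros d Hd Hst Hf Hev.
    destruct (exists_last (proj1 Hd)) as [d0 [Y ->]].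
    rewrite length_app, Nat.add_1_r, Nat.even_succ in Hev.
    assert (Hr : reachable bd A invariant_strategy d0)
      by (apply reachable_of_snoc with Y; assumption).
    apply (invariant_strategy_spec d0 Y (proj1 Hr) Hev (reachable_Good d0 Hr) Hd). }
  exists invariant_strategy. split; [exact Hlegal|].
  intros d [Hd Hc] Hst Hf. unfold won_by_pro.
  destruct (Nat.odd (length d)) eqn:E; [reflexivity|].
  exfalso. apply (Hc (invariant_strategy d)). apply Hlegal; try assumption.
  rewrite <- Nat.negb_odd, E. reflexivity.
Qed.
End Invariant.

Lemma opp_move_new_attacker (P O Y : T -> Prop) :
  conflict_free att P -> subset O (plus att P) -> opp_move (Some 1) P O Y ->
  exists b, Y b /\ attacks_set att b P /\ ~ plus att P b /\ forall y, Y y -> O y \/ b = y.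
Proof.
  intros HP HO (_ & _ & Hsz & Hnc).
  assert (Hb : exists b, Y b /\ attacks_set att b P /\ ~ plus att P b).
  { apply NNPP. intros Hn. apply Hnc. split; [exact HP|]. intros b Yb Ab.
    apply NNPP. intros Nb. apply Hn. exists b. auto. }
  destruct Hb as (b & Yb & Ab & Nb). exists b. split; [exact Yb|]. split; [exact Ab|].
  split; [exact Nb|]. intros y Yy. destruct (classic (O y)) as [Oy|Oy]; [left; exact Oy | right].
  apply (size_ok_one_eq _ y b Hsz); split; auto.
Qed.

Definition strong_shadow (S : strategy) A (d : D) : Prop :=
  subset (opp_set d) (plus att (pro_set d)) /\
  exists h, reachable None A S h /\
    subset (pro_set d) (pro_set h) /\ subset (opp_set h) (opp_set d).

Lemma strong_shadow_step (S : strategy) A (d : D) Y :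
  winning att None A S -> is_dispute att (Some 1) d -> strong_shadow S A d ->
  opp_move (Some 1) (pro_set d) (opp_set d) Y ->
  exists Z, pro_move (Some 1) (pro_set d) Y Z /\ strong_shadow S A ((d ++ [Y]) ++ [Z]).
Proof.
  intros HS Hd [HO (h & Hh & HPh & Hhd)] HY.
  pose proof (proj1 (proj2 HY)) as HOY.
  destruct (opp_move_new_attacker (pro_set d) (opp_set d) Y (is_dispute_pro_set_cf _ d Hd) HO HY)
    as (b & Yb & Ab & Nb & HYb).
  assert (Hh' : exists h', reachable None A S h' /\ subset (pro_set h) (pro_set h') /\
    subset (opp_set h') Y /\ plus att (pro_set h') b).
  { destruct (classic (plus att (pro_set h) b)) as [Hb|Nbh].
    - exists h. split; [exact Hh|]. split; [intros x Hx; exact Hx|].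
      split; [intros x Hx; apply HOY, Hhd, Hx | exact Hb].
    - destruct (reachable_counter_attack None A S h Y b HS Hh ltac:(discriminate) (proj1 HY)
        (fun x Hx => HOY x (Hhd x Hx)) Yb (attacks_set_subset _ _ b HPh Ab) Nbh)
        as (h' & Hh' & HY' & Hsub & _ & Hb).
      exists h'. auto. }
  destruct Hh' as (h' & Hh' & Hsub & HY' & [c [Hc Hcb]]).
  set (Z := fun x => pro_set d x \/ c = x).
  assert (HZ : subset Z (pro_set h')) by (intros x [Hx | <-]; [apply Hsub, HPh, Hx | exact Hc]).
  assert (HYZ : subset Y (plus att Z)).
  { intros y Yy. destruct (HYb y Yy) as [Oy | <-].
    - apply plus_subset with (pro_set d); [intros x Hx; left; exact Hx | apply HO, Oy].
    - exists c. split; [right; reflexivity | exact Hcb]. }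
  exists Z. split; [split; [|split]|].
  - intros x Hx. left. exact Hx.
  - apply size_ok_subset with (eq c); [|apply size_ok_eq; discriminate].
    intros x [[Hx|Hx] Hn]; [contradiction | exact Hx].
  - apply cogent_of_subset_plus; [|exact HYZ].
    apply conflict_free_subset with (pro_set h'); [exact HZ|].
    apply is_dispute_pro_set_cf with None, Hh'.
  - unfold strong_shadow. rewrite pro_set_snoc2, opp_set_snoc2.
    split; [exact HYZ|]. exists h'. auto.
Qed.

Lemma one_strongly_tenable_of_strongly_tenable A :
  strongly_tenable att A -> n_strongly_tenable att 1 A.
Proof.
  intros [S HS]. apply pro_wins_of_invariant with (Good := strong_shadow S A).
  - intros HA. split; [intros x []|]. exists [A].
    split; [apply reachable_init; exact HA | split; intros x Hx; exact Hx].
  - intros d Y Hd _ HG HY. apply strong_shadow_step; assumption.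
Qed.

Lemma reachable_absorb (s1 : strategy) A (Y : T -> Prop) :
  winning att (Some 1) A s1 -> conflict_free att Y -> finite_set Y ->
  forall h, reachable (Some 1) A s1 h -> subset (opp_set h) Y ->
  exists h', reachable (Some 1) A s1 h' /\ subset (opp_set h') Y /\
    subset (pro_set h) (pro_set h') /\ finite_set (set_diff (pro_set h') (pro_set h)) /\
    cogent att (pro_set h') Y.
Proof.
  intros Hw HY [R HR] h Hh HhY.
  assert (Hcov : forall x, Y x -> ~ plus att (pro_set h) x -> In x R) by auto.
  clear HR. revert h Hh HhY Hcov.
  (* Each counter-attacked argument leaves the list [R] of undefended arguments of [Y]. *)
  induction R as [R IH] using (induction_ltof1 _ (@length T)). intros h Hh HhY Hcov.
  destruct (classic (exists x, Y x /\ attacks_set att x (pro_set h) /\ ~ plus att (pro_set h) x))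
    as [(x & Yx & Ax & Nx) | Hno].
  - destruct (reachable_counter_attack (Some 1) A s1 h Y x
                 Hw Hh ltac:(discriminate) HY HhY Yx Ax Nx)
      as (h1 & Hh1 & Hh1Y & Hsub1 & [Hfin1 _] & Hx1).
    destruct (in_split x R (Hcov x Yx Nx)) as (R1 & R2 & ER).
    destruct (IH (R1 ++ R2)) with h1 as (h' & Hh' & Hh'Y & Hsub' & Hfin' & Hcog'); try assumption.
    + unfold ltof. rewrite ER, !length_app. cbn. lia.
    + intros y Yy Ny.
      assert (Hy : In y R).
      { apply Hcov; [exact Yy|]. intros Hp. apply Ny, plus_subset with (pro_set h); assumption. }
      rewrite ER in Hy. apply in_app_or in Hy. apply in_or_app.
      destruct Hy as [Hy | [<- | Hy]]; [left; exact Hy | contradiction | right; exact Hy].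
    + exists h'. split; [exact Hh'|]. split; [exact Hh'Y|].
      split; [intros z Hz; apply Hsub', Hsub1, Hz|].
      split; [|exact Hcog'].
      apply finite_set_cover
        with (set_diff (pro_set h') (pro_set h1)) (set_diff (pro_set h1) (pro_set h));
        [exact Hfin' | exact Hfin1 |].
      intros z [Hz Hn]. destruct (classic (pro_set h1 z)); [right | left]; split; assumption.
  - exists h. split; [exact Hh|]. split; [exact HhY|]. split; [intros z Hz; exact Hz|].
    split; [exists []; intros z [Hz Hn]; contradiction|].
    split; [exact (is_dispute_pro_set_cf _ h (proj1 Hh))|]. intros y Yy Ay.
    apply NNPP. intros Ny. apply Hno. exists y. auto.
Qed.

Definition one_shadow (s1 : strategy) A (d : D) : Prop :=
  finite_set (opp_set d) /\
  exists h, reachable (Some 1) A s1 h /\ pro_set h = pro_set d /\ subset (opp_set h) (opp_set d).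

Lemma one_shadow_step (s1 : strategy) A (d : D) Y :
  winning att (Some 1) A s1 -> one_shadow s1 A d -> opp_move None (pro_set d) (opp_set d) Y ->
  exists Z, pro_move None (pro_set d) Y Z /\ one_shadow s1 A ((d ++ [Y]) ++ [Z]).
Proof.
  intros Hw [HOfin (h & Hh & HPh & Hhd)] (HcfY & HOY & [Hfin _] & _).
  assert (HYfin : finite_set Y).
  { apply finite_set_cover with (opp_set d) (set_diff Y (opp_set d)); [exact HOfin | exact Hfin |].
    intros x Yx. destruct (classic (opp_set d x)); [left | right; split]; assumption. }
  destruct (reachable_absorb s1 A Y Hw HcfY HYfin h Hh (fun x Hx => HOY x (Hhd x Hx)))
    as (h' & Hh' & Hh'Y & Hsub & Hfin' & Hcog).
  rewrite HPh in Hsub, Hfin'.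
  exists (pro_set h').
  split; [split; [exact Hsub | split; [split; [exact Hfin' | exact I] | exact Hcog]]|].
  unfold one_shadow. rewrite pro_set_snoc2, opp_set_snoc2.
  split; [exact HYfin|]. exists h'. auto.
Qed.

Lemma strongly_tenable_of_one_strongly_tenable A :
  n_strongly_tenable att 1 A -> strongly_tenable att A.
Proof.
  intros [s1 Hw]. apply pro_wins_of_invariant with (Good := one_shadow s1 A).
  - intros HA. split; [exists []; intros x []|]. exists [A].
    split; [apply reachable_init; exact HA | split; [reflexivity | intros x Hx; exact Hx]].
  - intros d Y _ _ HG HY. apply one_shadow_step; assumption.
Qed.

End Disputes.

Theorem theorem5 (T : Type) (att : T -> T -> Prop) (A : T -> Prop) :
  strongly_tenable att A <-> n_strongly_tenable att 1 A.
Proof.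
  split.
  - apply one_strongly_tenable_of_strongly_tenable.
  - apply strongly_tenable_of_one_strongly_tenable.
Qed.
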